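(* Let $D>1$ be a square-free integer with $-D\equiv 2$ or $3 \pmod 4$, and suppose the form class group $C(-4D)$ (the class group of $\mathbb{Q}[\sqrt{-D}]$) is a free $\mathbb{Z}_2$-module, i.e. $C(-4D)\cong(\mathbb{Z}/2\mathbb{Z})^n$ for some $n\ge 0$. Then $G_D(\mathbb{Q})=U\times F$, where $U=\{\pm1\}$ and $F$ is a free abelian group. Moreover, let $c=p_1^{n_1}\cdots p_k^{n_k}$ with $p_1,\dots,p_k$ distinct primes and $n_i\ge 1$. If $\left(\frac{-D}{p_i}\right)=1$ for all $1\le i\le k$, then the number of normalized solutions of the form $(a,b,c)$ to $x^2+Dy^2=z^2$ is $2^{k-1}$. Otherwise, there are no normalized solutions of the form $(a,b,c)$.
   Context: $G_D(\mathbb{Q}):=\{a+b\sqrt{-D}\in\mathbb{Q}[\sqrt{-D}]: a,b\in\mathbb{Q},\ a^2+Db^2=1\}$, a group under multiplication of complex numbers. A normalized solution of $x^2+Dy^2=z^2$ is a triple $(a,b,c)$ of natural numbers with $a^2+Db^2=c^2$ and $\gcd(a,b,c)=1$. $C(-4D)$ denotes the set of $\mathrm{SL}_2(\mathbb{Z})$-equivalence classes of primitive positive-definite binary quadratic forms $ax^2+bxy+cy^2$ of discriminant $b^2-4ac=-4D$, a group under Dirichlet composition. $\left(\frac{\cdot}{p}\right)$ is the Legendre symbol (for odd primes $p$). *)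

From mathcomp Require Import all_boot all_order all_algebra.
Set Implicit Arguments. Unset Strict Implicit. Unset Printing Implicit Defensive.
Import Order.TTheory GRing.Theory Num.Theory.
Local Open Scope ring_scope.

Definition squarefree (n : nat) : Prop :=
  forall p : nat, prime p -> ~~ (p * p %| n)%N.

(* ---------- Legendre symbol (a / p), meaningful for odd primes p ---------- *)
Definition legendre (a : int) (p : nat) : int :=
  if (p%:Z %| a)%Z then 0
  else if [exists x : 'I_p, ((x%:Z) ^+ 2 == a %[mod p%:Z])%Z] then 1 else -1.

(* a + b sqrt(-D) is represented by the pair (a, b) of rationals. *)
Definition inGD (D : nat) (x : rat * rat) : Prop :=
  x.1 ^+ 2 + D%:R * x.2 ^+ 2 = 1.

(* multiplication of complex numbers (a + b sqrt(-D))(c + d sqrt(-D)) *)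
Definition gmul (D : nat) (x y : rat * rat) : rat * rat :=
  (x.1 * y.1 - D%:R * x.2 * y.2, x.1 * y.2 + x.2 * y.1).

Definition gone : rat * rat := (1, 0).
Definition gneg1 : rat * rat := (-1, 0).

(* inverse of a norm-one element: its conjugate *)
Definition ginv (x : rat * rat) : rat * rat := (x.1, - x.2).

Definition gpow (D : nat) (x : rat * rat) (z : int) : rat * rat :=
  match z with
  | Posz n => iter n (gmul D x) gone
  | Negz n => iter n.+1 (gmul D (ginv x)) gone
  end.

Definition gprod (D : nat) (s : seq ((rat * rat) * int)) : rat * rat :=
  foldr (fun p acc => gmul D (gpow D p.1 p.2) acc) gone s.

Definition in_span (D : nat) (B : rat * rat -> Prop) (y : rat * rat) : Prop :=
  exists s : seq ((rat * rat) * int),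
    (forall p, p \in s -> B p.1) /\ y = gprod D s.

Definition independent (D : nat) (B : rat * rat -> Prop) : Prop :=
  forall (s : seq (rat * rat)) (z : rat * rat -> int),
    uniq s -> (forall x, x \in s -> B x) ->
    gprod D [seq (x, z x) | x <- s] = gone ->
    forall x, x \in s -> z x = 0.

Definition inU (u : rat * rat) : Prop := u = gone \/ u = gneg1.

Definition GD_is_U_times_free (D : nat) : Prop :=
  exists B : rat * rat -> Prop,
    (forall x, B x -> inGD D x) /\
    independent D B /\
    (forall g, inGD D g ->
       exists u y, inU u /\ in_span D B y /\ g = gmul D u y) /\
    (forall u u' y y', inU u -> inU u' -> in_span D B y -> in_span D B y' ->
       gmul D u y = gmul D u' y' -> u = u' /\ y = y').

Definition normalized_sol (D : nat) (a b c : nat) : bool :=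
  (a ^ 2 + D * b ^ 2 == c ^ 2)%N && (gcdn (gcdn a b) c == 1)%N.

Definition qform := (int * int * int)%type.
Definition fa (f : qform) : int := f.1.1.
Definition fb (f : qform) : int := f.1.2.
Definition fc (f : qform) : int := f.2.

Definition feval (f : qform) (x y : int) : int :=
  fa f * x ^+ 2 + fb f * x * y + fc f * y ^+ 2.

Definition disc (f : qform) : int := fb f ^+ 2 - 4 * fa f * fc f.

Definition primitive_form (f : qform) : bool :=
  gcdz (gcdz (fa f) (fb f)) (fc f) == 1.

Definition posdef (f : qform) : bool := (0 < fa f) && (disc f < 0).

Definition form_equiv (f g : qform) : Prop :=
  exists p q r s : int, p * s - q * r = 1 /\
    forall x y : int, feval g x y = feval f (p * x + q * y) (r * x + s * y).

(* Dirichlet composition (Cox, Lemma 3.2): for f = (a,b,c), g = (a',b',c') of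
   the same discriminant Delta with gcd(a, a', (b+b')/2) = 1, the composite is
   (a a', B, (B^2 - Delta)/(4 a a')) where B = b mod 2a, B = b' mod 2a',
   B^2 = Delta mod 4aa'. *)
Definition dirichlet_composite (f g h : qform) : Prop :=
  disc f = disc g /\
  (2 %| fb f + fb g)%Z /\
  gcdz (gcdz (fa f) (fa g)) ((fb f + fb g) %/ 2)%Z = 1 /\
  fa h = fa f * fa g /\
  (fb h == fb f %[mod 2 * fa f])%Z /\
  (fb h == fb g %[mod 2 * fa g])%Z /\
  disc h = disc f.

Definition principal_form (D : nat) : qform := (1, 0, D%:Z).

Definition form_of_disc (Delta : int) (f : qform) : bool :=
  [&& primitive_form f, posdef f & disc f == Delta].

(* C(Delta) is an elementary abelian 2-group: the square (under Dirichlet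
   composition) of every class is the principal class. *)
Definition class_group_elem_2 (D : nat) : Prop :=
  forall f g h : qform,
    form_of_disc (- 4 * D%:Z) f -> form_of_disc (- 4 * D%:Z) g ->
    form_equiv f g -> dirichlet_composite f g h ->
    form_equiv (principal_form D) h.

(* Write [a + b sqrt(-D)] as the pair [(a, b)].  In a primitive solution of
   [a^2 + D b^2 = c^2], [c] is odd and prime to [D], and every prime [p | c] turns
   [a / b] into a square root of [-D] modulo [p]; two solutions whose hypotenuses
   share [p] induce the same root or conjugate roots, never both.  If [x] and [y]
   induce the same roots at all primes of [e], then [e^2] divides [x * conj y]; this
   gives both a division step [x = x' * y] for [y] of prime hypotenuse and uniqueness
   of a solution up to sign given its roots.  The hypothesis on [C(-4D)] enters
   once: when [-D] is a square modulo [p], the form [(p, 2r, _)] squares to the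
   principal class, so [p^2 = P^2 + D R^2] primitively.  Fixing such a solution
   [pi_p] for every such [p], every primitive solution is [+- prod pi_p^(+-v_p(c))],
   uniquely; this is the decomposition [G_D(Q) = {+-1} x <pi_p / p>], and the [2^k]
   sign patterns together with the global sign give [2^(k+1)] integer solutions,
   which [(a, b) |-> (|a|, |b|)] identifies four at a time. *)

From mathcomp Require Import all_boot all_order all_algebra.
From mathcomp Require Import ring zify.
Set Implicit Arguments. Unset Strict Implicit. Unset Printing Implicit Defensive.
Import Order.TTheory GRing.Theory Num.Theory.
Local Open Scope ring_scope.

Lemma Euclid_dvdzM (p : nat) (x y : int) : prime p ->
  (p%:Z %| x * y)%Z = (p%:Z %| x)%Z || (p%:Z %| y)%Z.
Proof. by move=> pp; rewrite !dvdzE abszM Euclid_dvdM. Qed.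

Lemma Euclid_dvdz_sqr (p : nat) (x : int) : prime p ->
  (p%:Z %| x ^+ 2)%Z = (p%:Z %| x)%Z.
Proof. by move=> pp; rewrite expr2 Euclid_dvdzM // orbb. Qed.

Lemma coprimez_prime (p : nat) (x : int) : prime p ->
  coprimez p%:Z x = ~~ (p%:Z %| x)%Z.
Proof. by move=> pp; rewrite coprimezE /= prime_coprime. Qed.

Lemma prime_dvdz2 (p : nat) : prime p -> (p%:Z %| 2)%Z -> p = 2%N.
Proof. by move=> pp; rewrite dvdzE /= dvdn_prime2 // => /eqP. Qed.

Lemma coprime_prime_free (a b : nat) : (0 < a)%N ->
  (forall q, prime q -> (q %| a)%N -> (q %| b)%N -> False) -> coprime a b.
Proof.
move=> a_gt0 nq; rewrite /coprime; case: (ltngtP (gcdn a b) 1) => // g_gt1.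
  by move: g_gt1; rewrite ltnNge gcdn_gt0 a_gt0.
have [q pq qg] := pdivP g_gt1; case: (nq q pq).
  exact: dvdn_trans qg (dvdn_gcdl _ _).
exact: dvdn_trans qg (dvdn_gcdr _ _).
Qed.

Lemma prime_dvd_prod_mem (p : nat) (qs : seq nat) (n : nat -> nat) : prime p ->
  (forall q, q \in qs -> prime q) -> (p %| \prod_(q <- qs) q ^ n q)%N -> p \in qs.
Proof.
move=> pp; elim: qs => [|q qs IH] qs_prime.
  by rewrite big_nil dvdn1 => /eqP p1; rewrite p1 in pp.
have q_prime := qs_prime q (mem_head q qs).
rewrite big_cons Euclid_dvdM // Euclid_dvdX // (dvdn_prime2 pp q_prime) in_cons.
case/orP => [/andP[-> //] | /IH -> //]; first by rewrite orbT.
by move=> r rqs; apply: qs_prime; rewrite in_cons rqs orbT.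
Qed.

Lemma dvdn_prod_pow (q : nat) (qs : seq nat) (n : nat -> nat) :
  q \in qs -> (0 < n q)%N -> (q %| \prod_(r <- qs) r ^ n r)%N.
Proof. by move=> qqs nq; rewrite (big_rem q qqs) /= dvdn_mulr // dvdn_exp. Qed.

Lemma prod_primes_logn (c : nat) : (0 < c)%N -> (\prod_(q <- primes c) q ^ logn q c)%N = c.
Proof. by move=> c_gt0; rewrite [RHS](prod_prime_decomp c_gt0) prime_decompE big_map. Qed.

Lemma PoszX (n k : nat) : (n ^ k)%N%:Z = n%:Z ^+ k.
Proof. by rewrite -natz natrX natz. Qed.

Lemma eq_of_sub_scaled (R : comPzRingType) (a b l r k : R) :
  l = r -> a - b = k * (l - r) -> a = b.
Proof. by move=> -> h; apply/eqP; rewrite -subr_eq0 h subrr mulr0. Qed.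

Lemma legendre_eq1P (a : int) (p : nat) : (0 < p)%N ->
  legendre a p = 1 <-> ~~ (p%:Z %| a)%Z /\ exists t : int, (p%:Z %| t ^+ 2 - a)%Z.
Proof.
move=> p_gt0; rewrite /legendre; case: ifP => [_ | pa]; first by split=> // -[].
case: existsP => [[x xa] | no_root].
  by split=> // _; split=> //; exists x; rewrite -eqz_mod_dvd.
split=> // -[_ [t pt]]; case: no_root.
have p0 : p%:Z != 0 by rewrite -lt0n.
have tp_ge0 : 0 <= (t %% p%:Z)%Z by apply: modz_ge0.
have tp_lt : (`|(t %% p%:Z)%Z| < p)%N by rewrite -ltz_nat gez0_abs // ltz_pmod.
by exists (Ordinal tp_lt); rewrite /= gez0_abs // modzXm eqz_mod_dvd.
Qed.

(** * The group law of [G_D(Q)] *)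

Section GroupGD.

Variable D : nat.

Lemma gmulA x y z : gmul D x (gmul D y z) = gmul D (gmul D x y) z.
Proof. by rewrite /gmul /=; congr pair; ring. Qed.

Lemma gmulC x y : gmul D x y = gmul D y x.
Proof. by rewrite /gmul /=; congr pair; ring. Qed.

Lemma gmul1 x : gmul D x gone = x.
Proof. by case: x => a b; rewrite /gmul /gone /=; congr pair; ring. Qed.

Lemma gmul1l x : gmul D gone x = x.
Proof. by rewrite gmulC gmul1. Qed.

Lemma gmulV x : inGD D x -> gmul D x (ginv x) = gone.
Proof.
rewrite /inGD /gmul /ginv /gone => x1 /=; congr pair; last by ring.
by apply: (eq_of_sub_scaled (k := 1) x1); ring.
Qed.

Lemma gmulVl x : inGD D x -> gmul D (ginv x) x = gone.
Proof. by move=> x1; rewrite gmulC gmulV. Qed.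

Lemma ginvM x y : ginv (gmul D x y) = gmul D (ginv x) (ginv y).
Proof. by rewrite /gmul /ginv /=; congr pair; ring. Qed.

Lemma ginvK x : ginv (ginv x) = x.
Proof. by case: x => a b; rewrite /ginv opprK. Qed.

Lemma ginv1 : ginv gone = gone.
Proof. by rewrite /ginv oppr0. Qed.

Lemma inGD_one : inGD D gone.
Proof. by rewrite /inGD /= expr0n mulr0 addr0 expr1n. Qed.

Lemma inGD_mul x y : inGD D x -> inGD D y -> inGD D (gmul D x y).
Proof.
rewrite /inGD /gmul /= => x1 y1.
have -> : (x.1 * y.1 - D%:R * x.2 * y.2) ^+ 2 + D%:R * (x.1 * y.2 + x.2 * y.1) ^+ 2
  = (x.1 ^+ 2 + D%:R * x.2 ^+ 2) * (y.1 ^+ 2 + D%:R * y.2 ^+ 2) by ring.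
by rewrite x1 y1 mul1r.
Qed.

Lemma inGD_inv x : inGD D x -> inGD D (ginv x).
Proof. by rewrite /inGD /ginv /= sqrrN. Qed.

Lemma inGD_pow x z : inGD D x -> inGD D (gpow D x z).
Proof.
move=> x1; suff iterG y n : inGD D y -> inGD D (iter n (gmul D y) gone).
  by case: z => n; rewrite /gpow; apply: iterG => //; apply: inGD_inv.
by move=> y1; elim: n => [|n IH] /=; [exact: inGD_one | exact: inGD_mul].
Qed.

Lemma gpowSr x z : inGD D x -> gpow D x (z + 1) = gmul D x (gpow D x z).
Proof.
move=> x1; case: z => [n|[|n]]; first by rewrite -PoszD addn1.
  by rewrite /= gmul1 gmulV.
have -> : Negz n.+1 + 1 = Negz n by rewrite !NegzE; lia.
by rewrite [in RHS]/= gmulA gmulV // gmul1l.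
Qed.

Lemma gpowSl x z : inGD D x -> gpow D x (z - 1) = gmul D (ginv x) (gpow D x z).
Proof.
move=> x1; case: z => [[|n]|n]; first by rewrite /= gmul1.
  have -> : Posz n.+1 - 1 = Posz n by lia.
  by rewrite [in RHS]/= gmulA gmulVl // gmul1l.
by have -> : Negz n - 1 = Negz n.+1 by rewrite !NegzE; lia.
Qed.

Lemma gpowD x m n : inGD D x -> gpow D x (m + n) = gmul D (gpow D x m) (gpow D x n).
Proof.
move=> x1; case: m => [a|a]; elim: a => [|a IH].
- by rewrite add0r gmul1l.
- by rewrite -addn1 PoszD addrAC gpowSr // IH gmulA -gpowSr // addrC.
- have -> : Negz 0 + n = n - 1 by rewrite NegzE; lia.
  by rewrite gpowSl //= gmul1.
- have -> : Negz a.+1 + n = (Negz a + n) - 1 by rewrite !NegzE; lia.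
  by rewrite gpowSl // IH gmulA.
Qed.

Lemma ginv_pow x z : ginv (gpow D x z) = gpow D x (- z).
Proof.
have iterV y n : ginv (iter n (gmul D y) gone) = iter n (gmul D (ginv y)) gone.
  by elim: n => [|n IH] /=; rewrite ?ginv1 // ginvM IH.
case: z => [[|n]|n]; first by rewrite /= ginv1.
  by rewrite /gpow iterV.
have -> : - Negz n = Posz n.+1 by rewrite NegzE opprK.
by rewrite /gpow iterV ginvK.
Qed.

Lemma gprod_cat s t : gprod D (s ++ t) = gmul D (gprod D s) (gprod D t).
Proof. by elim: s => [|p s IH] /=; rewrite ?gmul1l // IH gmulA. Qed.

Lemma ginv_gprod s : ginv (gprod D s) = gprod D [seq (p.1, - p.2) | p <- s].
Proof. by elim: s => [|p s IH] /=; rewrite ?ginv1 // ginvM IH ginv_pow. Qed.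

Lemma inGD_gprod s : (forall p, p \in s -> inGD D p.1) -> inGD D (gprod D s).
Proof.
elim: s => [|p s IH] sG /=; first exact: inGD_one.
apply: inGD_mul; first by apply/inGD_pow/sG; rewrite mem_head.
by apply: IH => q qs; apply: sG; rewrite in_cons qs orbT.
Qed.

Fixpoint total_exponent (s : seq ((rat * rat) * int)) (x : rat * rat) : int :=
  if s is p :: s' then (if p.1 == x then p.2 else 0) + total_exponent s' x else 0.

Lemma total_exponent_notin s x : x \notin [seq p.1 | p <- s] -> total_exponent s x = 0.
Proof.
elim: s => [|p s IH] //=; rewrite in_cons negb_or => /andP[xp xs].
by rewrite IH // eq_sym (negPf xp) addr0.
Qed.

Lemma gmul_pow_gprod l e x z : uniq l -> x \in l -> (forall y, y \in l -> inGD D y) ->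
  gmul D (gpow D x z) (gprod D [seq (y, e y) | y <- l]) =
  gprod D [seq (y, (if x == y then z else 0) + e y) | y <- l].
Proof.
elim: l => // y l IH /= /andP[yl ul]; rewrite in_cons => /predU1P[->|xl] lG.
  rewrite eqxx gmulA -gpowD; last by apply: lG; rewrite mem_head.
  congr (gmul D _ (gprod D _)); apply/eq_in_map => y' y'l.
  by case: eqP => [yy'|_]; [rewrite yy' y'l in yl | rewrite add0r].
have -> : (x == y) = false by apply: contraNF yl => /eqP <-.
rewrite add0r gmulA [gmul D (gpow D x z) _]gmulC -gmulA IH //.
by move=> y' y'l; apply: lG; rewrite in_cons y'l orbT.
Qed.

Lemma gprod_undup s : (forall p, p \in s -> inGD D p.1) ->
  gprod D s = gprod D [seq (y, total_exponent s y) | y <- undup [seq p.1 | p <- s]].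
Proof.
elim: s => [|[x z] s IH] sG //=.
rewrite IH; last by move=> p ps; apply: sG; rewrite in_cons ps orbT.
have xG : inGD D x by apply: (sG (x, z)); rewrite mem_head.
case: ifP => xs.
  rewrite gmul_pow_gprod ?undup_uniq ?mem_undup //.
  move=> y; rewrite mem_undup => /mapP[p ps ->]; apply: sG.
  by rewrite in_cons ps orbT.
rewrite /= eqxx (total_exponent_notin (negbT xs)) addr0; congr (gmul D _ (gprod D _)).
apply/eq_in_map => y; rewrite mem_undup => ys.
by case: eqP => [xy|_]; [move: xs; rewrite xy ys | rewrite add0r].
Qed.

End GroupGD.

(** * Sign patterns *)

Section SignPatterns.

Variables (p1 : nat) (rest : seq nat).
Hypothesis uniq_primes : uniq (p1 :: rest).

(* Sign patterns on [p1 :: rest] that are [true] at [p1], coded by their values on [rest]. *)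
Definition pattern (t : seq bool) (q : nat) : bool := nth true (true :: t) (index q (p1 :: rest)).

Lemma pattern_head t : pattern t p1.
Proof. by rewrite /pattern /= eqxx. Qed.

Lemma pattern_nth t i : (i < size rest)%N -> pattern t (nth 0%N rest i) = nth true t i.
Proof.
move: uniq_primes => /andP[p1_rest urest] i_lt; rewrite /pattern /=.
have -> : (p1 == nth 0%N rest i) = false.
  by apply: contraNF p1_rest => /eqP ->; rewrite mem_nth.
by rewrite index_uniq.
Qed.

Lemma pattern_map (eps : nat -> bool) : eps p1 -> {in p1 :: rest, pattern (map eps rest) =1 eps}.
Proof.
move=> e1 q; rewrite in_cons => /predU1P[-> | qr]; first by rewrite pattern_head.
by rewrite -(nth_index 0%N qr) pattern_nth ?index_mem // (nth_map 0%N) ?index_mem.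
Qed.

Lemma pattern_inj (t t' : (size rest).-tuple bool) :
  {in p1 :: rest, pattern t =1 pattern t'} -> t = t'.
Proof.
move=> tt'; apply/val_inj/(@eq_from_nth _ true) => [|i]; first by rewrite !size_tuple.
rewrite size_tuple => i_lt; rewrite -!pattern_nth //.
by apply: tt'; rewrite in_cons mem_nth ?orbT.
Qed.

Lemma enum_sign_patterns (T : eqType) (f : (nat -> bool) -> T) :
  (forall eps eps' : nat -> bool, {in p1 :: rest, eps =1 eps'} -> f eps = f eps') ->
  (forall eps eps' : nat -> bool, eps p1 -> eps' p1 -> f eps = f eps' ->
     {in p1 :: rest, eps =1 eps'}) ->
  exists s : seq T, [/\ uniq s,
    forall y, (exists2 eps : nat -> bool, eps p1 & y = f eps) <-> y \in s
    & size s = (2 ^ size rest)%N].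
Proof.
move=> f_eq f_inj.
exists [seq f (pattern t) | t : (size rest).-tuple bool]; split.
- rewrite map_inj_uniq ?enum_uniq // => t t' /f_inj ftt'.
  exact/pattern_inj/ftt'/pattern_head/pattern_head.
- move=> y; split=> [[eps e1 ->] | /mapP[t _ ->]].
    apply/mapP; exists (map_tuple eps (in_tuple rest)); first by rewrite mem_enum.
    by apply: f_eq => q /(pattern_map e1) ->.
  by exists (pattern t); rewrite ?pattern_head.
- by rewrite size_map -cardE card_tuple card_bool.
Qed.

End SignPatterns.

(** * Primitive solutions of [x^2 + D y^2 = z^2] *)

Section Solutions.

Variable D : nat.

Definition znorm (x : int * int) : int := x.1 ^+ 2 + D%:Z * x.2 ^+ 2.

Definition zmul (x y : int * int) : int * int :=
  (x.1 * y.1 - D%:Z * x.2 * y.2, x.1 * y.2 + x.2 * y.1).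

Definition zone : int * int := (1, 0).
Definition zconj (x : int * int) : int * int := (x.1, - x.2).
Definition zopp (x : int * int) : int * int := (- x.1, - x.2).
Definition zscale (k : int) (x : int * int) : int * int := (k * x.1, k * x.2).
Definition zpow (x : int * int) (n : nat) : int * int := iter n (zmul x) zone.

Lemma znormM x y : znorm (zmul x y) = znorm x * znorm y.
Proof. by rewrite /znorm /=; ring. Qed.

Lemma znorm_conj x : znorm (zconj x) = znorm x.
Proof. by rewrite /znorm sqrrN. Qed.

Lemma zmulC x y : zmul x y = zmul y x.
Proof. by rewrite /zmul; congr pair; ring. Qed.

Lemma zmul_conjK x y : zmul (zmul x (zconj y)) y = zscale (znorm y) x.
Proof. by rewrite /zmul /zscale /znorm /=; congr pair; ring. Qed.

Lemma zmulK_conj x y : zmul (zmul x y) (zconj y) = zscale (znorm y) x.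
Proof. by rewrite /zmul /zscale /znorm /=; congr pair; ring. Qed.

Lemma zmulZl k x y : zmul (zscale k x) y = zscale k (zmul x y).
Proof. by rewrite /zmul /zscale /=; congr pair; ring. Qed.

Lemma zscale_inj k : k != 0 -> injective (zscale k).
Proof. by move=> k0 [a b] [a' b'] [/(mulfI k0) -> /(mulfI k0) ->]. Qed.

Lemma zconjK x : zconj (zconj x) = x.
Proof. by case: x => a b; rewrite /zconj opprK. Qed.

Lemma zconjM x y : zconj (zmul x y) = zmul (zconj x) (zconj y).
Proof. by rewrite /zconj /zmul /=; congr pair; ring. Qed.

Lemma zconj_pow x n : zconj (zpow x n) = zpow (zconj x) n.
Proof.
elim: n => [|n IH]; first by rewrite /zconj /= oppr0.
by rewrite /zpow /= zconjM; congr zmul.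
Qed.

Lemma dvdz_zmul (q : int) x y : (q %| x.1)%Z -> (q %| x.2)%Z ->
  (q %| (zmul x y).1)%Z && (q %| (zmul x y).2)%Z.
Proof.
move=> q1 q2; rewrite /zmul /= -mulrA.
by rewrite rpredB ?rpredD ?(dvdz_mulr _ q1) ?(dvdz_mulr _ q2) ?(dvdz_mull _ (dvdz_mulr _ q2)).
Qed.

Definition primitive (x : int * int) : Prop :=
  forall q : nat, prime q -> (q%:Z %| x.1)%Z -> (q%:Z %| x.2)%Z -> False.

Definition prim_sol (x : int * int) (c : nat) : Prop :=
  znorm x = c%:Z ^+ 2 /\ primitive x.

(* [x] and [y] define the same square root [x.1 / x.2] of [-D] modulo [p]. *)
Definition same_root (p : nat) (x y : int * int) : bool :=
  (p%:Z %| x.1 * y.2 - y.1 * x.2)%Z.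

Lemma prim_sol_one : prim_sol zone 1.
Proof.
split; first by rewrite /znorm /= expr0n /= mulr0 addr0.
by move=> q pq; rewrite dvdzE /= dvdn1 => /eqP q1; rewrite q1 in pq.
Qed.

Lemma prim_sol_opp x c : prim_sol x c -> prim_sol (zopp x) c.
Proof.
case=> xn xp; split; first by rewrite /znorm !sqrrN.
by move=> q pq /=; rewrite !rpredN; apply: xp.
Qed.

Lemma prim_sol_conj x c : prim_sol x c -> prim_sol (zconj x) c.
Proof.
case=> xn xp; split; first by rewrite znorm_conj.
by move=> q pq /= q1; rewrite rpredN; apply: xp.
Qed.

Lemma same_root_refl p x : same_root p x x.
Proof. by rewrite /same_root subrr dvdz0. Qed.

Lemma same_root_sym p x y : same_root p x y = same_root p y x.
Proof. by rewrite /same_root -rpredN opprB. Qed.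

Lemma same_root_oppl p x y : same_root p (zopp x) y = same_root p x y.
Proof.
rewrite /same_root /=.
have -> : - x.1 * y.2 - y.1 * - x.2 = - (x.1 * y.2 - y.1 * x.2) by ring.
by rewrite rpredN.
Qed.

Lemma same_root_conjr p x y :
  same_root p x (zconj y) = (p%:Z %| x.1 * y.2 + y.1 * x.2)%Z.
Proof.
rewrite /same_root /=.
have -> : x.1 * - y.2 - y.1 * x.2 = - (x.1 * y.2 + y.1 * x.2) by ring.
by rewrite rpredN.
Qed.

Lemma same_root_mulr p x z : (p%:Z %| znorm x)%Z -> same_root p (zmul x z) x.
Proof.
move=> px; rewrite /same_root /zmul /=.
have -> : (x.1 * z.1 - D%:Z * x.2 * z.2) * x.2 - x.1 * (x.1 * z.2 + x.2 * z.1)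
   = - (znorm x * z.2) by rewrite /znorm; ring.
by rewrite rpredN dvdz_mulr.
Qed.

Lemma same_root_mull p x z : (p%:Z %| znorm x)%Z -> same_root p (zmul z x) x.
Proof. by rewrite zmulC; apply: same_root_mulr. Qed.

Lemma dvdz_znorm x c p : prim_sol x c -> (p %| c)%N -> (p%:Z %| znorm x)%Z.
Proof. by case=> -> _ pc; rewrite dvdz_exp. Qed.

Lemma same_root_or_conj x y c d p : prim_sol x c -> prim_sol y d -> prime p ->
  (p %| c)%N -> (p %| d)%N -> same_root p x y || same_root p x (zconj y).
Proof.
move=> xs ys pp pc pd; rewrite -Euclid_dvdzM //.
have -> : (x.1 * y.2 - y.1 * x.2) * (x.1 * (zconj y).2 - (zconj y).1 * x.2)
   = znorm y * x.2 ^+ 2 - znorm x * y.2 ^+ 2 by rewrite /znorm /=; ring.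
by rewrite rpredB // dvdz_mulr // (dvdz_znorm xs, dvdz_znorm ys).
Qed.

Hypothesis D_gt1 : (1 < D)%N.

Lemma znorm_eq1 w : znorm w = 1 -> w = zone \/ w = zopp zone.
Proof.
case: w => a b; rewrite /znorm /= => n1.
have b0 : b = 0 by have D2 : 2 <= D%:Z by []; nia.
move: n1; rewrite b0 expr0n mulr0 addr0 /= => /eqP; rewrite sqrf_eq1.
by case/orP => /eqP->; [left | right].
Qed.

Lemma prim_sol_gt0 x c : prim_sol x c -> (0 < c)%N.
Proof.
case: c => // -[n0 xp]; have D2 : 2 <= D%:Z by [].
move: n0; rewrite /znorm expr0n /= => n0.
have [x10 x20] : x.1 = 0 /\ x.2 = 0 by split; nia.
by case: (xp 2 isT); rewrite ?x10 ?x20 dvdz0.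
Qed.

Lemma prim_sol_ndvd2 x c p : prim_sol x c -> prime p -> (p %| c)%N ->
  ~~ (p%:Z %| x.2)%Z.
Proof.
move=> [xn xp] pp pc; apply/negP => p2; apply: (xp p pp) => //.
rewrite -Euclid_dvdz_sqr //.
have -> : x.1 ^+ 2 = c%:Z ^+ 2 - D%:Z * x.2 ^+ 2 by rewrite -xn /znorm; ring.
by rewrite rpredB ?dvdz_mull // Euclid_dvdz_sqr.
Qed.

Lemma same_root_trans x y z d p : prim_sol y d -> prime p -> (p %| d)%N ->
  same_root p x y -> same_root p y z -> same_root p x z.
Proof.
move=> ys pp pd xy yz.
have : (p%:Z %| y.2 * (x.1 * z.2 - z.1 * x.2))%Z.
  have -> : y.2 * (x.1 * z.2 - z.1 * x.2)
     = z.2 * (x.1 * y.2 - y.1 * x.2) + x.2 * (y.1 * z.2 - z.1 * y.2) by ring.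
  by rewrite rpredD ?dvdz_mull.
by rewrite Euclid_dvdzM // (negPf (prim_sol_ndvd2 ys pp pd)).
Qed.

Hypothesis D_sqfree : squarefree D.

Lemma prim_sol_ndvdD x c p : prim_sol x c -> prime p -> (p %| c)%N -> ~~ (p %| D)%N.
Proof.
move=> xs pp pc; apply/negP => pD; have [xn xp] := xs.
have p1 : (p%:Z %| x.1)%Z.
  rewrite -Euclid_dvdz_sqr //.
  have -> : x.1 ^+ 2 = c%:Z ^+ 2 - D%:Z * x.2 ^+ 2 by rewrite -xn /znorm; ring.
  by rewrite rpredB ?dvdz_mulr // Euclid_dvdz_sqr.
have : (p%:Z ^+ 2 %| D%:Z * x.2 ^+ 2)%Z.
  have -> : D%:Z * x.2 ^+ 2 = c%:Z ^+ 2 - x.1 ^+ 2 by rewrite -xn /znorm; ring.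
  by rewrite rpredB // dvdz_exp2r.
rewrite Gauss_dvdzl; last first.
  by rewrite coprimezXl // coprimezXr // coprimez_prime // (prim_sol_ndvd2 xs).
by rewrite dvdzE abszX /= => p2D; move: (D_sqfree pp); rewrite p2D.
Qed.

Lemma prim_sol_ndvd1 x c p : prim_sol x c -> prime p -> (p %| c)%N ->
  ~~ (p%:Z %| x.1)%Z.
Proof.
move=> xs pp pc; apply/negP => p1.
have : (p%:Z %| D%:Z * x.2 ^+ 2)%Z.
  have -> : D%:Z * x.2 ^+ 2 = c%:Z ^+ 2 - x.1 ^+ 2 by rewrite -xs.1 /znorm; ring.
  by rewrite rpredB // Euclid_dvdz_sqr.
rewrite Euclid_dvdzM // Euclid_dvdz_sqr // dvdzE /=.
by rewrite (negPf (prim_sol_ndvdD xs pp pc)) (negPf (prim_sol_ndvd2 xs pp pc)).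
Qed.

Lemma ndvdz2_odd (x : int) : ~~ (2%:Z %| x)%Z -> exists k, x = 2 * k + 1.
Proof.
move=> x_odd; exists (x %/ 2)%Z; have := divz_eq x 2.
have : (0 <= x %% 2)%Z by apply: modz_ge0.
have : (x %% 2 < 2)%Z by apply: ltz_pmod.
have : (x %% 2)%Z != 0 by apply: contra x_odd => /eqP/dvdz_mod0P.
lia.
Qed.

Hypothesis D_mod4 : (((- D%:Z) %% 4)%Z == 2) || (((- D%:Z) %% 4)%Z == 3).

(* An even hypotenuse would force [-D = 1 (mod 4)]. *)
Lemma prim_sol_odd_prime x c p : prim_sol x c -> prime p -> (p %| c)%N -> odd p.
Proof.
move=> xs pp pc; case: (even_prime pp) => // p2; exfalso; rewrite p2 in pp pc.
have [k ek] := ndvdz2_odd (prim_sol_ndvd1 xs pp pc).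
have [l el] := ndvdz2_odd (prim_sol_ndvd2 xs pp pc).
have [m em] := dvdnP pc; have := xs.1; rewrite /znorm ek el em PoszM => e.
have e' : - D%:Z = (- (m%:Z ^+ 2 - k ^+ 2 - k - D%:Z * (l ^+ 2 + l))) * 4 + 1.
  by apply: (eq_of_sub_scaled (k := -1) e); ring.
by move: D_mod4; rewrite e' modzMDl.
Qed.

Lemma same_root_conj_excl x y c d p : prim_sol x c -> prim_sol y d -> prime p ->
  (p %| c)%N -> (p %| d)%N -> same_root p x y -> ~~ same_root p x (zconj y).
Proof.
move=> xs ys pp pc pd xy; apply/negP => xy'.
have : (p%:Z %| 2 * (y.1 * x.2))%Z.
  move: xy xy'; rewrite same_root_conjr /same_root => xy xy'.
  have -> : 2 * (y.1 * x.2) = (x.1 * y.2 + y.1 * x.2) - (x.1 * y.2 - y.1 * x.2) by ring.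
  exact: rpredB.
rewrite !Euclid_dvdzM // (negPf (prim_sol_ndvd1 ys pp pd)).
rewrite (negPf (prim_sol_ndvd2 xs pp pc)) /= orbF => /(prime_dvdz2 pp) p2.
by move: (prim_sol_odd_prime xs pp pc); rewrite p2.
Qed.

(* The cross term [x.1 y.2 + y.1 x.2] is prime to [e] by [same_root_conj_excl], which
   forces [e^2 | (x * conj y).2]; the norm of [x * conj y] then forces
   [e^2 | (x * conj y).1]. *)
Lemma dvdz_zmul_conj x y c d (e : nat) : prim_sol x c -> prim_sol y d ->
  (e %| c)%N -> (e %| d)%N ->
  (forall q, prime q -> (q %| e)%N -> same_root q x y) ->
  exists w, zmul x (zconj y) = zscale (e%:Z ^+ 2) w.
Proof.
move=> xs ys ec ed xy.
have e_gt0 : (0 < e)%N by apply: dvdn_gt0 ec; apply: prim_sol_gt0 xs.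
set n := (zmul x (zconj y)).1; set m := (zmul x (zconj y)).2.
have cross_coprime : coprimez (e%:Z ^+ 2) (x.1 * y.2 + y.1 * x.2).
  rewrite coprimezXl // coprimezE /=; apply: coprime_prime_free => // q pq qe qk.
  have := same_root_conj_excl xs ys pq (dvdn_trans qe ec) (dvdn_trans qe ed) (xy q pq qe).
  by rewrite same_root_conjr dvdzE qk.
have em : (e%:Z ^+ 2 %| m)%Z.
  rewrite -(Gauss_dvdzl _ cross_coprime).
  have -> : m * (x.1 * y.2 + y.1 * x.2) = x.2 ^+ 2 * znorm y - y.2 ^+ 2 * znorm x.
    by rewrite /m /znorm /=; ring.
  by rewrite xs.1 ys.1 rpredB // dvdz_mull // dvdz_exp2r.
have en : (e%:Z ^+ 2 %| n)%Z.
  rewrite -(dvdz_pexp2r _ _ (isT : (0 < 2)%N)).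
  have -> : n ^+ 2 = znorm x * znorm y - D%:Z * m ^+ 2 by rewrite /n /m /znorm /=; ring.
  rewrite xs.1 ys.1 rpredB ?(dvdz_mull _ (dvdz_exp2r 2 em)) //.
  by rewrite [X in (X %| _)%Z]expr2; apply: dvdz_mul; apply: dvdz_exp2r.
have [[n' en'] [m' em']] := (dvdzP en, dvdzP em).
exists (n', m'); rewrite /zscale /= [_ * n']mulrC [_ * m']mulrC -en' -em' /n /m.
by case: (zmul x (zconj y)).
Qed.

Lemma prim_sol_eq_or_opp x y c : prim_sol x c -> prim_sol y c ->
  (forall p, prime p -> (p %| c)%N -> same_root p x y) -> x = y \/ x = zopp y.
Proof.
move=> xs ys xy; have [w ew] := dvdz_zmul_conj xs ys (dvdnn c) (dvdnn c) xy.
have c2 : c%:Z ^+ 2 != 0 by rewrite expf_eq0 /= -lt0n (prim_sol_gt0 xs).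
have w1 : znorm w = 1.
  apply: (mulfI (expf_neq0 2 c2)); rewrite mulr1.
  have := congr1 znorm ew; rewrite znormM znorm_conj xs.1 ys.1 /znorm /=.
  by move=> e; apply: (eq_of_sub_scaled (k := -1) e); ring.
have xw : x = zmul w y.
  by apply: (zscale_inj c2); rewrite -zmulZl -ew -ys.1 zmul_conjK.
rewrite xw; case: (znorm_eq1 w1) => -> ; [left | right];
  by case: y {xs ys xy ew xw} => a b; rewrite /zmul /zopp /=; congr pair; ring.
Qed.

Lemma prim_sol_divr x s c p : prim_sol x c -> prim_sol s p -> prime p -> (p %| c)%N ->
  same_root p x s -> exists2 x', prim_sol x' (c %/ p) & x = zmul x' s.
Proof.
move=> xs ss pp pc xs_root.
have p_same : forall q, prime q -> (q %| p)%N -> same_root q x s.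
  by move=> q pq; rewrite dvdn_prime2 // => /eqP->.
have [w ew] := dvdz_zmul_conj xs ss pc (dvdnn p) p_same.
have p2 : p%:Z ^+ 2 != 0 by rewrite expf_eq0 /= -lt0n prime_gt0.
have xw : x = zmul w s.
  by apply: (zscale_inj p2); rewrite -zmulZl -ew -ss.1 zmul_conjK.
exists w => //; split.
  apply: (mulIf p2); rewrite -{1}ss.1 -znormM -xw xs.1 -exprMn -PoszM.
  by rewrite divnK.
by move=> q pq q1 q2; apply: (xs.2 q pq); move: (dvdz_zmul s q1 q2); rewrite -xw => /andP[].
Qed.

Lemma primitive_zmul_ndvd x y c d q : prim_sol x c -> prim_sol y d -> prime q ->
  ~~ (q %| d)%N -> (q%:Z %| (zmul x y).1)%Z -> (q%:Z %| (zmul x y).2)%Z -> False.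
Proof.
move=> xs ys pq qd q1 q2; apply: (xs.2 q pq).
all: move: (dvdz_zmul (zconj y) q1 q2); rewrite zmulK_conj ys.1 /zscale /=.
all: by rewrite !Euclid_dvdzM // orbb dvdzE /= (negPf qd) /= => /andP[].
Qed.

Lemma prim_sol_mul x y c d : prim_sol x c -> prim_sol y d ->
  (forall q, prime q -> (q %| c)%N -> (q %| d)%N -> same_root q x y) ->
  prim_sol (zmul x y) (c * d).
Proof.
move=> xs ys xy; split; first by rewrite znormM xs.1 ys.1 PoszM exprMn.
move=> q pq q1 q2.
have : (q%:Z %| (c * d)%N%:Z ^+ 2)%Z.
  rewrite PoszM exprMn -xs.1 -ys.1 -znormM /znorm.
  by apply: rpredD; [|apply: dvdz_mull]; rewrite Euclid_dvdz_sqr.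
rewrite Euclid_dvdz_sqr // dvdzE /= Euclid_dvdM // => /orP[qc|qd].
  have [qd|nqd] := boolP (q %| d)%N; last exact: primitive_zmul_ndvd xs ys pq nqd q1 q2.
  have := same_root_conj_excl xs ys pq qc qd (xy q pq qc qd).
  by rewrite same_root_conjr /= [y.1 * x.2]mulrC q2.
have [qc|nqc] := boolP (q %| c)%N.
  have := same_root_conj_excl xs ys pq qc qd (xy q pq qc qd).
  by rewrite same_root_conjr /= [y.1 * x.2]mulrC q2.
by rewrite zmulC in q1 q2; apply: primitive_zmul_ndvd ys xs pq nqc q1 q2.
Qed.

(** * Prime hypotenuses from the class group *)

Lemma coprimez_prime_double_root p t : prime p -> odd p -> ~~ (p %| D)%N ->
  (p%:Z %| t ^+ 2 + D%:Z)%Z -> coprimez p%:Z (2 * t).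
Proof.
move=> pp p_odd pD pt; rewrite coprimez_prime // Euclid_dvdzM //; apply/norP; split.
  by apply/negP => /(prime_dvdz2 pp) p2; rewrite p2 in p_odd.
apply: contra pD => p_t; suff : (p%:Z %| D%:Z)%Z by [].
have -> : D%:Z = (t ^+ 2 + D%:Z) - t ^+ 2 by ring.
by rewrite rpredB // dvdz_exp.
Qed.

Lemma sqrt_mod_sq_lift p t : prime p -> odd p -> ~~ (p %| D)%N ->
  (p%:Z %| t ^+ 2 + D%:Z)%Z -> exists r, (p%:Z ^+ 2 %| r ^+ 2 + D%:Z)%Z.
Proof.
move=> pp p_odd pD pt.
have [[u w] /= uw] := coprimezP _ _ (coprimez_prime_double_root pp p_odd pD pt).
have [k ek] := dvdzP pt; exists (t - k * w * p%:Z).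
have -> : (t - k * w * p%:Z) ^+ 2 + D%:Z
   = k * p%:Z * (1 - w * (2 * t)) + k ^+ 2 * w ^+ 2 * p%:Z ^+ 2.
  by apply: (eq_of_sub_scaled (k := 1) ek); ring.
have -> : 1 - w * (2 * t) = u * p%:Z by apply: (eq_of_sub_scaled (k := -1) uw); ring.
have -> : k * p%:Z * (u * p%:Z) + k ^+ 2 * w ^+ 2 * p%:Z ^+ 2
   = (k * u + k ^+ 2 * w ^+ 2) * p%:Z ^+ 2 by ring.
exact: dvdz_mull (dvdzz _).
Qed.

Lemma form_equiv_refl f : form_equiv f f.
Proof.
exists 1, 0, 0, 1; split=> [|x y]; first by rewrite mulr1 mulr0 subr0.
by rewrite !mul1r !mul0r addr0 add0r.
Qed.

Lemma principal_equiv_prim_rep h : form_equiv (principal_form D) h ->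
  exists2 y, znorm y = fa h & primitive y.
Proof.
case=> P [Q [R [S [det ev]]]]; exists (P, R).
  move: (ev 1 0); rewrite /feval /znorm /principal_form /fa /fb /fc /=.
  by rewrite !(mulr1, mulr0, addr0, expr0n, expr1n, mul1r, mul0r) => ->.
move=> q pq /= qP qR.
have : (q%:Z %| P * S - Q * R)%Z by rewrite rpredB ?(dvdz_mulr _ qP) ?(dvdz_mull _ qR).
by rewrite det dvdzE /= dvdn1 => /eqP q1; rewrite q1 in pq.
Qed.

Hypothesis D_class2 : class_group_elem_2 D.

(* The form [(p, 2r, (r^2 + D)/p)] composes with itself to
   [(p^2, 2r, (r^2 + D)/p^2)], which the hypothesis on [C(-4D)] makes
   equivalent to the principal form. *)
Lemma prim_sol_of_sqrt_mod p r : prime p -> odd p -> ~~ (p %| D)%N ->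
  (p%:Z ^+ 2 %| r ^+ 2 + D%:Z)%Z -> exists y, prim_sol y p.
Proof.
move=> pp p_odd pD p2r.
have pr : (p%:Z %| r ^+ 2 + D%:Z)%Z by apply: dvdz_trans p2r; rewrite dvdz_mulr.
have p_2r := coprimez_prime_double_root pp p_odd pD pr.
pose f : qform := (p%:Z, 2 * r, ((r ^+ 2 + D%:Z) %/ p%:Z)%Z).
pose h : qform := (p%:Z ^+ 2, 2 * r, ((r ^+ 2 + D%:Z) %/ p%:Z ^+ 2)%Z).
have disc_f : disc f = - 4 * D%:Z.
  by rewrite /disc /fa /fb /fc /= -mulrA [p%:Z * _]mulrC divzK //; ring.
have f_form : form_of_disc (- 4 * D%:Z) f.
  rewrite /form_of_disc /primitive_form /posdef disc_f eqxx /fa /fb /fc /=.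
  rewrite (eqP p_2r) gcd1z eqxx /= andbT ltz_nat prime_gt0 //=.
  by have := D_gt1; lia.
have fh : dirichlet_composite f f h.
  rewrite /dirichlet_composite /fa /fb /fc /= disc_f.
  have -> : 2 * r + 2 * r = 2 * r * 2 by ring.
  rewrite dvdz_mull // mulzK // gcdzz.
  rewrite (eqP p_2r) expr2 !eqxx; do !split.
  by rewrite /disc /fa /fb /fc /= -mulrA [p%:Z ^+ 2 * _]mulrC divzK //; ring.
have [y yn yp] := principal_equiv_prim_rep (D_class2 f_form f_form (form_equiv_refl f) fh).
by exists y.
Qed.

Lemma sqrt_mod_sq_of_prim_sol x c p : prim_sol x c -> prime p -> (p %| c)%N ->
  exists r, (p%:Z ^+ 2 %| r ^+ 2 + D%:Z)%Z.
Proof.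
move=> xs pp pc.
have : coprimez x.2 (p%:Z ^+ 2).
  by rewrite coprimez_sym coprimezXl // coprimez_prime // (prim_sol_ndvd2 xs).
case/coprimezP => -[u w] /= uw; exists (x.1 * u).
have -> : (x.1 * u) ^+ 2 + D%:Z
   = u ^+ 2 * znorm x + D%:Z * (1 - u * x.2) * (1 + u * x.2) by rewrite /znorm; ring.
have -> : 1 - u * x.2 = w * p%:Z ^+ 2 by apply: (eq_of_sub_scaled (k := -1) uw); ring.
rewrite xs.1 [D%:Z * _ * _]mulrAC; apply: rpredD.
  by apply: dvdz_mull; apply: dvdz_exp2r.
by apply: dvdz_mull; apply: dvdz_mull.
Qed.

Lemma prim_sol_dvd_prime x c p : prim_sol x c -> prime p -> (p %| c)%N ->
  exists y, prim_sol y p.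
Proof.
move=> xs pp pc; have [r pr] := sqrt_mod_sq_of_prim_sol xs pp pc.
exact: prim_sol_of_sqrt_mod pp (prim_sol_odd_prime xs pp pc) (prim_sol_ndvdD xs pp pc) pr.
Qed.

Lemma legendre_prim_sol p : prime p -> odd p -> legendre (- D%:Z) p = 1 ->
  exists y, prim_sol y p.
Proof.
move=> pp p_odd /(legendre_eq1P _ (prime_gt0 pp)) [pD [t pt]].
rewrite opprK in pt; rewrite rpredN in pD.
have [r pr] := sqrt_mod_sq_lift pp p_odd pD pt.
exact: prim_sol_of_sqrt_mod pp p_odd pD pr.
Qed.

Lemma legendre_of_prim_sol x c p : prim_sol x c -> p \in primes c ->
  odd p /\ legendre (- D%:Z) p = 1.
Proof.
move=> xs; rewrite mem_primes => /and3P[pp _ pc].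
split; first exact: prim_sol_odd_prime xs pp pc.
apply/(legendre_eq1P _ (prime_gt0 pp)); rewrite rpredN; split.
  exact: prim_sol_ndvdD xs pp pc.
have [r pr] := sqrt_mod_sq_of_prim_sol xs pp pc; exists r.
by rewrite opprK; apply: dvdz_trans pr; rewrite dvdz_mulr.
Qed.

(** * The structure of [G_D(Q)] *)

Definition zfrac (x : int * int) (c : nat) : rat * rat := (x.1%:~R / c%:R, x.2%:~R / c%:R).

Definition zpowz (x : int * int) (z : int) : int * int :=
  match z with Posz n => zpow x n | Negz n => zpow (zconj x) n.+1 end.

Lemma zfrac_mul x y c d : zfrac (zmul x y) (c * d) = gmul D (zfrac x c) (zfrac y d).
Proof.
by rewrite /zfrac /gmul /= natrM invfM; congr pair; rewrite ?intrD ?intrB ?intrM; ring.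
Qed.

Lemma zfrac_conj x c : zfrac (zconj x) c = ginv (zfrac x c).
Proof. by rewrite /zfrac /ginv /= intrN mulNr. Qed.

Lemma zfrac_one : zfrac zone 1 = gone.
Proof. by rewrite /zfrac /gone /= divr1 mul0r. Qed.

Lemma zfrac_scale (k : nat) x c : (0 < k)%N -> zfrac (zscale k x) (k * c) = zfrac x c.
Proof.
move=> k_gt0; have k0 : k%:R != 0 :> rat by rewrite pnatr_eq0 -lt0n.
by rewrite /zfrac /= natrM !intrM !invfM; congr pair; rewrite mulrACA divff // mul1r.
Qed.

Lemma zfrac_pow s p z : gpow D (zfrac s p) z = zfrac (zpowz s z) (p ^ `|z|).
Proof.
have iter_zfrac y n : iter n (gmul D (zfrac y p)) gone = zfrac (zpow y n) (p ^ n).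
  elim: n => [|n IH]; first by rewrite expn0 zfrac_one.
  by rewrite /= IH -zfrac_mul expnS.
by case: z => n; rewrite /gpow -?zfrac_conj iter_zfrac.
Qed.

Lemma same_root_zpow s p n : prim_sol s p -> (0 < n)%N -> same_root p (zpow s n) s.
Proof. by case: n => // n ss _; apply: same_root_mulr (dvdz_znorm ss (dvdnn p)). Qed.

Lemma prim_sol_zpow s p n : prime p -> prim_sol s p -> prim_sol (zpow s n) (p ^ n).
Proof.
move=> pp ss; elim: n => [|n IH]; first exact: prim_sol_one.
rewrite expnS; apply: (prim_sol_mul ss IH) => q pq qp.
rewrite Euclid_dvdX // => /andP[_ n_gt0]; move: qp; rewrite dvdn_prime2 // => /eqP->.
by rewrite same_root_sym same_root_zpow.
Qed.

Lemma prim_sol_zpowz s p z : prime p -> prim_sol s p -> prim_sol (zpowz s z) (p ^ `|z|).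
Proof. by move=> pp ss; case: z => n; apply: prim_sol_zpow => //; apply: prim_sol_conj. Qed.

Lemma zfrac_inGD x c : prim_sol x c -> inGD D (zfrac x c).
Proof.
move=> xs; have c0 : c%:R != 0 :> rat by rewrite pnatr_eq0 -lt0n (prim_sol_gt0 xs).
have xn : (znorm x)%:~R = (c%:Z ^+ 2)%:~R :> rat by rewrite xs.1.
rewrite /inGD /zfrac /=; apply: (eq_of_sub_scaled (k := (c%:R ^+ 2)^-1) xn).
by rewrite /znorm; field.
Qed.

Lemma zfrac_inj x y c d : prim_sol x c -> prim_sol y d -> zfrac x c = zfrac y d ->
  c = d /\ x = y.
Proof.
move=> xs ys [e1 e2].
have c_gt0 := prim_sol_gt0 xs; have d_gt0 := prim_sol_gt0 ys.
have cross (u v : int) : u%:~R / c%:R = v%:~R / d%:R :> rat -> u * d%:Z = v * c%:Z.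
  move/eqP; rewrite eqr_div ?pnatr_eq0 -?lt0n //.
  by rewrite -[d%:R]/((d%:Z)%:~R) -[c%:R]/((c%:Z)%:~R) -!intrM eqr_int => /eqP.
have f1 := cross _ _ e1; have f2 := cross _ _ e2.
have coprime1 z n : prim_sol z n -> coprimez n%:Z z.1.
  move=> zs; rewrite coprimezE /=; apply: coprime_prime_free (prim_sol_gt0 zs) _.
  by move=> q pq qn; apply/negP; apply: (prim_sol_ndvd1 zs pq qn).
have c_d : (c%:Z %| d%:Z)%Z.
  by rewrite -(Gauss_dvdzr _ (coprime1 _ _ xs)) f1; apply: dvdz_mull.
have d_c : (d%:Z %| c%:Z)%Z.
  by rewrite -(Gauss_dvdzr _ (coprime1 _ _ ys)) -f1; apply: dvdz_mull.
have cd : c = d by apply/eqP; rewrite eqn_dvd; apply/andP.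
split=> //; rewrite cd in f1 f2; have d0 : d%:Z != 0 by rewrite -lt0n.
by case: x y {xs ys e1 e2} f1 f2 => [a b] [a' b'] /= /(mulIf d0) -> /(mulIf d0) ->.
Qed.

Lemma prim_sol_reduce x (c : nat) : (0 < c)%N -> znorm x = c%:Z ^+ 2 ->
  exists y c', prim_sol y c' /\ zfrac x c = zfrac y c'.
Proof.
move=> c_gt0 xn; pose g := gcdn `|x.1| `|x.2|.
have g_gt0 : (0 < g)%N.
  rewrite gcdn_gt0 !absz_gt0; move: c_gt0; apply: contraTT.
  case/norP => /negPn/eqP x1 /negPn/eqP x2; move: xn.
  by rewrite /znorm x1 x2 expr0n mulr0 addr0 => /esym/eqP; rewrite sqrf_eq0 => /eqP[->].
pose y := ((x.1 %/ g%:Z)%Z, (x.2 %/ g%:Z)%Z).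
have xy : x = zscale g y.
  rewrite /zscale /y /= ![g%:Z * _]mulrC !divzK ?(dvdz_gcdl, dvdz_gcdr) //.
  exact: surjective_pairing.
have g0 : g%:Z ^+ 2 != 0 by rewrite expf_eq0 /= -lt0n.
have yn : c%:Z ^+ 2 = g%:Z ^+ 2 * znorm y by rewrite -xn xy /znorm /=; ring.
have [c' cc'] : exists c', c = (g * c')%N.
  have : (g%:Z ^+ 2 %| c%:Z ^+ 2)%Z by rewrite yn dvdz_mulr.
  by rewrite dvdz_pexp2r // dvdzE /= => /dvdnP[c' ->]; exists c'; rewrite mulnC.
exists y, c'; split; last by rewrite xy cc' zfrac_scale.
split; first by apply: (mulfI g0); rewrite -yn cc' PoszM exprMn.
move=> q pq q1 q2.
have : ((q * g)%:Z %| gcdz x.1 x.2)%Z.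
  rewrite dvdz_gcd xy /zscale /= PoszM ![g%:Z * _]mulrC.
  by rewrite !dvdz_mul2r ?q1 ?q2 // -lt0n.
rewrite dvdzE /= => /(dvdn_leq g_gt0); have := prime_gt1 pq; nia.
Qed.

Lemma inGD_zfrac g : inGD D g -> exists x c, prim_sol x c /\ g = zfrac x c.
Proof.
case: g => u v; rewrite /inGD /= => uv1.
have [[du edu] [dv edv]] := (denqP u, denqP v).
pose c := (du.+1 * dv.+1)%N; pose x := (numq u * dv.+1%:Z, numq v * du.+1%:Z).
have ux : (u, v) = zfrac x c.
  rewrite /zfrac /x /c /= !intrM natrM -{1}(divq_num_den u) -{1}(divq_num_den v) edu edv.
  rewrite -[du.+1%:~R]/(du.+1%:R : rat) -[dv.+1%:~R]/(dv.+1%:R : rat).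
  by congr pair; field; rewrite !nat1r !pnatr_eq0.
have xn : znorm x = c%:Z ^+ 2.
  apply/eqP; rewrite -(eqr_int rat) /znorm /x /c /= !(intrD, intrM, rmorphXn) !numqE edu edv.
  rewrite -[du.+1%:~R]/(du.+1%:R : rat) -[dv.+1%:~R]/(dv.+1%:R : rat).
  apply/eqP; apply: (eq_of_sub_scaled (k := (du.+1%:R * dv.+1%:R) ^+ 2) uv1).
  by rewrite -[D%:~R]/(D%:R : rat) -[(_ * _)%N%:~R]/((du.+1 * dv.+1)%:R : rat) natrM; ring.
have [|y [c' [ys xy]]] := prim_sol_reduce _ xn; first by rewrite muln_gt0.
by exists y, c'; rewrite ux.
Qed.

Lemma znorm_nat (a b : nat) : znorm (a%:Z, b%:Z) = (a ^ 2 + D * b ^ 2)%N%:Z.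
Proof. by rewrite /znorm /= PoszD PoszM !PoszX. Qed.

Lemma abszX2 (x : int) : `|x|%N%:Z ^+ 2 = x ^+ 2.
Proof. by rewrite abszE real_normK // num_real. Qed.

Lemma normalized_prim_sol a b c : normalized_sol D a b c -> prim_sol (a%:Z, b%:Z) c.
Proof.
case/andP => /eqP abc /eqP g1; split; first by rewrite znorm_nat abc PoszX.
move=> q pq qa qb; have [qa' qb'] : (q %| a)%N /\ (q %| b)%N by [].
have qc : (q %| c)%N.
  suff : (q%:Z %| c%:Z ^+ 2)%Z by rewrite Euclid_dvdz_sqr.
  rewrite -PoszX -abc -znorm_nat /znorm /=.
  by apply: rpredD; [|apply: dvdz_mull]; rewrite Euclid_dvdz_sqr.
by move: (prime_gt1 pq); rewrite ltnNge dvdn_leq // -g1 !dvdn_gcd qa' qb' qc.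
Qed.

Lemma prim_sol_normalized x c : prim_sol x c -> normalized_sol D `|x.1|%N `|x.2|%N c.
Proof.
move=> xs; apply/andP; split.
  by rewrite -eqz_nat -znorm_nat PoszX -xs.1 /znorm /= !abszX2.
rewrite gcdnC; apply: coprime_prime_free (prim_sol_gt0 xs) _ => q pq qc.
by rewrite !dvdn_gcd => /andP[qa qb]; apply: (xs.2 q pq).
Qed.

Definition hyp_prime (p : nat) : Prop := prime p /\ exists y, prim_sol y p.

(* A fixed choice among the four solutions [(+-a, +-b)] of hypotenuse [p], found by a
   bounded search. *)
Definition canon_sol (p : nat) : int * int :=
  if [pick ab : 'I_p.+1 * 'I_p.+1 |
      ((ab.1 : nat) ^ 2 + D * (ab.2 : nat) ^ 2 == p ^ 2) && (0 < (ab.2 : nat))]%N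
  is Some ab then ((ab.1 : nat)%:Z, (ab.2 : nat)%:Z) else zone.

Lemma prim_sol_canon p : hyp_prime p -> prim_sol (canon_sol p) p.
Proof.
case=> pp [y ys]; rewrite /canon_sol; case: pickP => [[a b] /= /andP[/eqP abp b_gt0] | no_sol].
  apply: normalized_prim_sol; rewrite /normalized_sol abp eqxx /= gcdnC.
  rewrite -[(gcdn p _ == 1)%N]/(coprime p _) prime_coprime //.
  apply/negP => /dvdn_trans/(_ (dvdn_gcdr _ _)) /(dvdn_leq b_gt0) pb.
  by have := D_gt1; nia.
have [/eqP abp _] := andP (prim_sol_normalized ys).
have b_gt0 : (0 < `|y.2|)%N.
  by rewrite absz_gt0; apply: contraNneq (prim_sol_ndvd2 ys pp (dvdnn p)) => ->.
have a_lt : (`|y.1| < p.+1)%N by rewrite ltnS -(@leq_exp2r _ _ 2) // -abp leq_addr.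
have b_lt : (`|y.2| < p.+1)%N by rewrite ltnS -(@leq_exp2r _ _ 2) // -abp; have := D_gt1; nia.
by have := no_sol (Ordinal a_lt, Ordinal b_lt); rewrite /= abp eqxx b_gt0.
Qed.

Definition oriented_sol (b : bool) (p : nat) : int * int :=
  if b then canon_sol p else zconj (canon_sol p).

Lemma prim_sol_oriented b p : hyp_prime p -> prim_sol (oriented_sol b p) p.
Proof. by move=> /prim_sol_canon ps; case: b => //; apply: prim_sol_conj. Qed.

Lemma same_root_oriented x c p : prim_sol x c -> hyp_prime p -> (p %| c)%N ->
  same_root p x (oriented_sol (same_root p x (canon_sol p)) p).
Proof.
move=> xs hp pc; rewrite /oriented_sol; case: ifP => // nb.
by have := same_root_or_conj xs (prim_sol_canon hp) hp.1 pc (dvdnn p); rewrite nb.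
Qed.

Lemma oriented_sol_inj b b' p : hyp_prime p ->
  same_root p (oriented_sol b p) (oriented_sol b' p) -> b = b'.
Proof.
move=> hp; have ps := prim_sol_canon hp.
have excl := same_root_conj_excl ps ps hp.1 (dvdnn p) (dvdnn p) (same_root_refl _ _).
by case: b b' => -[] //=; last rewrite same_root_sym; move=> r; rewrite r in excl.
Qed.

Definition GD_basis (x : rat * rat) : Prop :=
  exists2 p, hyp_prime p & x = zfrac (canon_sol p) p.

Lemma GD_basis_inGD x : GD_basis x -> inGD D x.
Proof. by case=> p hp ->; apply/zfrac_inGD/prim_sol_canon. Qed.

Lemma zfrac_oriented b p :
  zfrac (oriented_sol b p) p = gpow D (zfrac (canon_sol p) p) (if b then 1 else -1).
Proof. by case: b; rewrite /= gmul1 // zfrac_conj. Qed.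

Lemma zfrac_factor x c : prim_sol x c ->
  exists u y, inU u /\ in_span D GD_basis y /\ zfrac x c = gmul D u y.
Proof.
elim/ltn_ind: c x => c IH x xs; have c_gt0 := prim_sol_gt0 xs.
have [c1 | c_gt1] := leqP c 1.
  have c1' : c = 1%N by apply/eqP; rewrite eqn_leq c1.
  exists (zfrac x c), gone; split; last by split; [exists [::] | rewrite gmul1].
  have := xs.1; rewrite c1' expr1n => /znorm_eq1[->|->]; [left | right];
    by rewrite /zfrac /= !divr1 ?oppr0.
pose p := pdiv c; have pp : prime p := pdiv_prime c_gt1; have pc := pdiv_dvd c.
have hp : hyp_prime p by split; last exact: prim_sol_dvd_prime xs pp pc.
move: (same_root_oriented xs hp pc); move: (same_root p x (canon_sol p)) => b xb.
have [x' x's ->] := prim_sol_divr xs (prim_sol_oriented b hp) pp pc xb.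
have [u [_ [hu [[s [sB ->]] x'uy]]]] := IH _ (ltn_Pdiv (prime_gt1 pp) c_gt0) x' x's.
pose t := (zfrac (canon_sol p) p, if b then 1 else -1) :: s.
exists u, (gprod D t); split=> //; split.
  by exists t; split=> // q; rewrite in_cons => /predU1P[-> | /sB //]; exists p.
rewrite -{1}(divnK pc) zfrac_mul x'uy zfrac_oriented -gmulA; congr (gmul D u _).
exact: gmulC.
Qed.

(* The last clause keeps the two factors coprime in the induction step. *)
Lemma gprod_basis_prim_sol l e : uniq l -> (forall x, x \in l -> GD_basis x) ->
  exists G c, [/\ prim_sol G c, gprod D [seq (x, e x) | x <- l] = zfrac G c,
    (c = 1)%N -> forall x, x \in l -> e x = 0 &
    forall q, prime q -> (q %| c)%N -> zfrac (canon_sol q) q \in l].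
Proof.
elim: l => [_ _ | x l IH /= /andP[xl ul] lB].
  exists zone, 1%N; split; [exact: prim_sol_one | by rewrite zfrac_one | by [] |].
  by move=> q pq; rewrite dvdn1 => /eqP q1; rewrite q1 in pq.
have [G' [c' [G's lG' l0 lc']]] := IH ul (fun y yl => lB y (@mem_behead _ (x :: l) y yl)).
have [p hp xp] := lB x (mem_head x l); have ps := prim_sol_canon hp.
have pk_prime q : prime q -> (q %| p ^ `|e x|)%N -> q = p.
  by move=> pq; rewrite Euclid_dvdX // (dvdn_prime2 pq hp.1) => /andP[/eqP].
exists (zmul (zpowz (canon_sol p) (e x)) G'), (p ^ `|e x| * c')%N; split.
- apply: prim_sol_mul (prim_sol_zpowz _ hp.1 ps) G's _ => q pq qpk qc'.
  by move: (lc' q pq qc'); rewrite (pk_prime q pq qpk) -xp (negPf xl).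
- by rewrite lG' xp zfrac_mul zfrac_pow.
- move/eqP; rewrite muln_eq1 => /andP[/eqP pk1 /eqP c1] y.
  rewrite in_cons => /predU1P[-> | /(l0 c1) //].
  apply/eqP; rewrite -absz_eq0; move: pk1; case: `|e x|%N => // k.
  by rewrite expnS; have := prime_gt1 hp.1; nia.
- move=> q pq; rewrite Euclid_dvdM // => /orP[/(pk_prime _ pq) -> | /(lc' _ pq) ql].
    by rewrite -xp mem_head.
  by rewrite in_cons ql orbT.
Qed.

Lemma in_span_mul y y' : in_span D GD_basis y -> in_span D GD_basis y' ->
  in_span D GD_basis (gmul D y y').
Proof.
case=> [s [sB ->]] [s' [s'B ->]]; exists (s ++ s'); rewrite gprod_cat; split=> // q.
by rewrite mem_cat => /orP[/sB | /s'B].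
Qed.

Lemma in_span_inv y : in_span D GD_basis y -> in_span D GD_basis (ginv y).
Proof.
case=> [s [sB ->]]; exists [seq (p.1, - p.2) | p <- s]; rewrite ginv_gprod.
by split=> // q /mapP[p /sB pB ->].
Qed.

Lemma in_span_inGD y : in_span D GD_basis y -> inGD D y.
Proof. by case=> s [sB ->]; apply: inGD_gprod => p /sB /GD_basis_inGD. Qed.

Lemma neg1_notin_span : ~ in_span D GD_basis gneg1.
Proof.
case=> t [tB]; rewrite gprod_undup => [e | p /tB /GD_basis_inGD //].
have uB x : x \in undup [seq p.1 | p <- t] -> GD_basis x.
  by rewrite mem_undup => /mapP[p /tB xB ->].
have [G [c [Gs eG c1 _]]] := gprod_basis_prim_sol (total_exponent t) (undup_uniq _) uB.
have Gneg1 : zfrac G c = zfrac (zopp zone) 1 by rewrite -eG -e /zfrac /= !divr1 oppr0.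
have [/c1 t0 _] := zfrac_inj Gs (prim_sol_opp prim_sol_one) Gneg1.
move: e; set l := undup _.
have -> : [seq (x, total_exponent t x) | x <- l] = [seq (x, 0) | x <- l].
  by apply/eq_in_map => y /t0 ->.
by elim: l {uB eG t0} => [|y l IH] //=; rewrite gmul1l.
Qed.

Lemma GD_basis_independent : independent D GD_basis.
Proof.
move=> s z us sB e x xs; have [G [c [Gs eG c1 _]]] := gprod_basis_prim_sol z us sB.
have [c_1 _] := zfrac_inj Gs prim_sol_one (etrans (esym eG) (etrans e (esym zfrac_one))).
exact: c1 c_1 x xs.
Qed.

Lemma GD_U_times_free : GD_is_U_times_free D.
Proof.
exists GD_basis; split; first exact: GD_basis_inGD.
split; first exact: GD_basis_independent.
split; first by move=> g /inGD_zfrac [x [c [xs ->]]]; apply: zfrac_factor.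
have sign_excl y y' : in_span D GD_basis y -> in_span D GD_basis y' ->
    y <> gmul D gneg1 y'.
  move=> ys ys' yy'; apply: neg1_notin_span; have y'G := in_span_inGD ys'.
  by have := in_span_mul ys (in_span_inv ys'); rewrite yy' -gmulA gmulV ?gmul1.
have neg1_sq : gmul D gneg1 gneg1 = gone by rewrite /gmul /=; congr pair; ring.
move=> u u' y y' [] -> [] -> ys ys'; rewrite ?gmul1l => e.
- by [].
- by case: (sign_excl _ _ ys ys' e).
- by case: (sign_excl _ _ ys' ys (esym e)).
- by split=> //; have := congr1 (gmul D gneg1) e; rewrite !gmulA neg1_sq !gmul1l.
Qed.

(** * Counting normalized solutions *)

Definition signed_sol (qs : seq nat) (n : nat -> nat) (eps : nat -> bool) : int * int :=
  foldr (fun q y => zmul (zpow (oriented_sol (eps q) q) (n q)) y) zone qs.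

Lemma prim_sol_signed qs n eps : uniq qs -> (forall q, q \in qs -> hyp_prime q) ->
  prim_sol (signed_sol qs n eps) (\prod_(q <- qs) q ^ n q).
Proof.
elim: qs => [_ _ | q qs IH /= /andP[qqs uqs] hqs]; first by rewrite big_nil; apply: prim_sol_one.
have hq := hqs q (mem_head q qs).
have hqs' r : r \in qs -> hyp_prime r by move=> rqs; apply: hqs; rewrite in_cons rqs orbT.
have pow_sol := prim_sol_zpow (n q) hq.1 (prim_sol_oriented (eps q) hq).
rewrite big_cons; apply: prim_sol_mul pow_sol (IH uqs hqs') _.
move=> r pr; rewrite Euclid_dvdX // (dvdn_prime2 pr hq.1) => /andP[/eqP -> _].
move/(prime_dvd_prod_mem hq.1 (fun r rqs => (hqs' r rqs).1)) => qqs'.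
by rewrite qqs' in qqs.
Qed.

Lemma same_root_signed qs n eps q : uniq qs -> (forall r, r \in qs -> hyp_prime r) ->
  q \in qs -> (0 < n q)%N -> same_root q (signed_sol qs n eps) (oriented_sol (eps q) q).
Proof.
move=> uqs hqs qqs nq_gt0; have hq := hqs q qqs; have sq := prim_sol_oriented (eps q) hq.
elim: qs uqs hqs qqs => // r qs IH /= /andP[_ uqs] hqs.
have hqs' r' : r' \in qs -> hyp_prime r' by move=> r'qs; apply: hqs; rewrite in_cons r'qs orbT.
have qs_sol := prim_sol_signed n eps uqs hqs'.
rewrite in_cons => /predU1P[qr | qqs].
  rewrite -qr; have pow_sol := prim_sol_zpow (n q) hq.1 sq.
  have q_pow : (q %| q ^ n q)%N by rewrite dvdn_exp.
  apply: (same_root_trans pow_sol hq.1 q_pow); last exact: same_root_zpow.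
  exact/same_root_mulr/(dvdz_znorm pow_sol q_pow).
have q_prod := dvdn_prod_pow qqs nq_gt0.
apply: (same_root_trans qs_sol hq.1 q_prod _ (IH uqs hqs' qqs)).
exact/same_root_mull/(dvdz_znorm qs_sol q_prod).
Qed.

Lemma signed_sol_eq_in qs n eps eps' : {in qs, eps =1 eps'} ->
  signed_sol qs n eps = signed_sol qs n eps'.
Proof.
elim: qs => //= q qs IH e; rewrite e ?mem_head // IH // => r rqs.
by apply: e; rewrite in_cons rqs orbT.
Qed.

Lemma zconj_signed qs n eps :
  zconj (signed_sol qs n eps) = signed_sol qs n (negb \o eps).
Proof.
elim: qs => [|q qs IH] /=; first by rewrite /zconj oppr0.
by rewrite zconjM zconj_pow IH /oriented_sol; case: (eps q); rewrite ?zconjK.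
Qed.

Lemma signed_sol_sign_inj qs n eps eps' : uniq qs -> (forall q, q \in qs -> hyp_prime q) ->
  (forall q, q \in qs -> 0 < n q)%N ->
  signed_sol qs n eps = signed_sol qs n eps' \/
    signed_sol qs n eps = zopp (signed_sol qs n eps') ->
  {in qs, eps =1 eps'}.
Proof.
move=> uqs hqs n_gt0 e q qqs; have hq := hqs q qqs.
have q_prod := dvdn_prod_pow qqs (n_gt0 q qqs).
have e_root : same_root q (signed_sol qs n eps) (signed_sol qs n eps').
  by case: e => ->; rewrite ?same_root_oppl same_root_refl.
apply: (oriented_sol_inj hq).
apply: (same_root_trans (prim_sol_signed n eps uqs hqs) hq.1 q_prod).
  by rewrite same_root_sym same_root_signed ?n_gt0.
apply: (same_root_trans (prim_sol_signed n eps' uqs hqs) hq.1 q_prod e_root).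
exact: same_root_signed (n_gt0 q qqs).
Qed.

Definition sign_sol (c : nat) (eps : nat -> bool) : int * int :=
  signed_sol (primes c) (fun q => logn q c) eps.

Lemma prim_sol_sign_sol c eps : (0 < c)%N -> (forall q, q \in primes c -> hyp_prime q) ->
  prim_sol (sign_sol c eps) c.
Proof.
move=> c_gt0 hc; rewrite -{2}(prod_primes_logn c_gt0).
exact: prim_sol_signed (primes_uniq c) hc.
Qed.

Lemma prim_sol_sign_decomp x c : prim_sol x c -> (forall q, q \in primes c -> hyp_prime q) ->
  exists eps, x = sign_sol c eps \/ x = zopp (sign_sol c eps).
Proof.
move=> xs hc; exists (fun q => same_root q x (canon_sol q)).
apply: (prim_sol_eq_or_opp xs (prim_sol_sign_sol _ (prim_sol_gt0 xs) hc)) => p pp pc.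
have pc' : p \in primes c by rewrite mem_primes pp (prim_sol_gt0 xs).
have hp := hc p pc'.
apply: (same_root_trans (prim_sol_oriented _ hp) pp (dvdnn p) (same_root_oriented xs hp pc)).
by rewrite same_root_sym same_root_signed ?primes_uniq // logn_gt0.
Qed.

Definition nat_abs (x : int * int) : nat * nat := (`|x.1|%N, `|x.2|%N).

Lemma nat_abs_eq x y : nat_abs x = nat_abs y ->
  [\/ x = y, x = zopp y, x = zconj y | x = zopp (zconj y)].
Proof.
have abs_eq (a b : int) : `|a|%N = `|b|%N -> a = b \/ a = - b.
  move=> ab; have : (a - b) * (a + b) == 0.
    by rewrite -subr_sqr -[a ^+ 2]abszX2 -[b ^+ 2]abszX2 ab subrr.
  by rewrite mulf_eq0 subr_eq0 addr_eq0 => /orP[] /eqP; [left | right].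
case: x y => [a1 a2] [b1 b2] [/abs_eq[]-> /abs_eq[]->]; rewrite /zopp /zconj ?opprK.
- by constructor 1.
- by constructor 3.
- by constructor 4.
- by constructor 2.
Qed.

Lemma nat_abs_opp x : nat_abs (zopp x) = nat_abs x.
Proof. by rewrite /nat_abs !abszN. Qed.

Lemma nat_abs_conj x : nat_abs (zconj x) = nat_abs x.
Proof. by rewrite /nat_abs abszN. Qed.

Lemma normalized_solP c p1 a b : p1 \in primes c ->
  (forall q, q \in primes c -> hyp_prime q) ->
  normalized_sol D a b c <->
  exists2 eps : nat -> bool, eps p1 & (a, b) = nat_abs (sign_sol c eps).
Proof.
move=> p1c hc; have c_gt0 : (0 < c)%N by move: p1c; rewrite mem_primes => /and3P[].
split=> [/normalized_prim_sol abs | [eps _ [-> ->]]]; last first.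
  exact/prim_sol_normalized/prim_sol_sign_sol.
have [eps e] := prim_sol_sign_decomp abs hc.
have ab : (a, b) = nat_abs (sign_sol c eps).
  by case: e => e; [rewrite -e | rewrite -nat_abs_opp -e].
case e1: (eps p1); first by exists eps.
exists (negb \o eps); first by rewrite /= e1.
by rewrite ab -nat_abs_conj /sign_sol zconj_signed.
Qed.

Lemma sign_sol_inj c p1 (eps eps' : nat -> bool) : p1 \in primes c ->
  (forall q, q \in primes c -> hyp_prime q) -> eps p1 -> eps' p1 ->
  nat_abs (sign_sol c eps) = nat_abs (sign_sol c eps') -> {in primes c, eps =1 eps'}.
Proof.
move=> p1c hc e1 e1' /nat_abs_eq e.
have n_gt0 q : q \in primes c -> (0 < logn q c)%N by rewrite logn_gt0.
have inj := signed_sol_sign_inj (primes_uniq c) hc n_gt0.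
have conj_excl : ~ (sign_sol c eps = zconj (sign_sol c eps') \/
                   sign_sol c eps = zopp (zconj (sign_sol c eps'))).
  by rewrite /sign_sol zconj_signed => /inj/(_ p1 p1c) /=; rewrite e1 e1'.
case: e => e; [apply: inj | apply: inj | case: conj_excl | case: conj_excl].
all: by [left | right].
Qed.

Lemma normalized_sol_count c : (1 < c)%N -> (forall q, q \in primes c -> hyp_prime q) ->
  exists s : seq (nat * nat), uniq s /\
    (forall a b : nat, normalized_sol D a b c <-> (a, b) \in s) /\
    size s = (2 ^ (size (primes c)).-1)%N.
Proof.
move=> c_gt1 hc; have : primes c != [::] by rewrite primes_eq0 -leqNgt.
case pc: (primes c) => [//|p1 rest] _; have p1c : p1 \in primes c by rewrite pc mem_head.
have := primes_uniq c; rewrite pc => urest.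
have [||s [us sP ss]] := enum_sign_patterns urest (f := fun eps => nat_abs (sign_sol c eps)).
- by move=> eps eps'; rewrite -pc => /signed_sol_eq_in e; rewrite /sign_sol e.
- by move=> eps eps' e1 e1' /(sign_sol_inj p1c hc e1 e1'); rewrite pc.
exists s; split=> //; split=> // a b; rewrite -sP; exact: normalized_solP.
Qed.

End Solutions.

Theorem theorem1p1 (D : nat) :
  (1 < D)%N -> squarefree D ->
  (((- D%:Z) %% 4)%Z == 2) || (((- D%:Z) %% 4)%Z == 3) ->
  class_group_elem_2 D ->
  GD_is_U_times_free D /\
  (forall c : nat, (1 < c)%N ->
     ((forall p : nat, p \in primes c -> odd p /\ legendre (- D%:Z) p = 1) ->
        exists s : seq (nat * nat), uniq s /\
          (forall a b : nat, normalized_sol D a b c <-> (a, b) \in s) /\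
          size s = (2 ^ (size (primes c)).-1)%N) /\
     (~ (forall p : nat, p \in primes c -> odd p /\ legendre (- D%:Z) p = 1) ->
        forall a b : nat, ~~ normalized_sol D a b c)).
Proof.
move=> D_gt1 D_sqfree D_mod4 D_class2; split; first exact: GD_U_times_free.
move=> c c_gt1; split.
  move=> hc; apply: normalized_sol_count => // q qc.
  have [q_odd q_leg] := hc q qc; have q_prime : prime q by move: qc; rewrite mem_primes => /andP[].
  by split=> //; apply: legendre_prim_sol.
move=> not_all a b; apply/negP => /normalized_prim_sol abs; apply: not_all => p.
exact: legendre_of_prim_sol abs.
Qed.
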